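(* For every $t\ge 1$, LOCAL-WEFT$[t]\subseteq$ LOCAL-FPT.
   Context: Distributed LOCAL model: a network is a finite connected undirected graph $G$, $n=|V(G)|$, nodes have unique $O(\log n)$-bit identifiers, initially know only their identifier, their neighbours' identifiers, their input labels and the parameter $k$; computation in synchronous rounds with unbounded messages to neighbours and arbitrary local computation; time = number of rounds. $\mathcal G_{s,t}$ is the set of finite connected graphs with unary predicates $P_1..P_s$ and binary predicates $E_1..E_t$; a parameterized problem is a set $\mathsf P\subseteq\mathcal G_{s,t}\times\mathbb N$. An algorithm decides $\mathsf P$ if every node outputs accept/reject and $(G,k)\in\mathsf P$ iff some node accepts. LOCAL-FPT: problems decided by a LOCAL algorithm in $f(k)$ rounds, $f$ computable. LOCAL reductions: a LOCAL algorithm turning $(G,k)$ into $(G',k')$ represented by maps $\nu:V(G')\to V(G)$ and $\eta$ assigning to each edge $\{x,y\}\in E(G')$ a path of $G$ between $\nu(x)$ and $\nu(y)$ (stored at the nodes of $G$; all nodes know $k'$). $\mathsf P_1\le_{\mathrm{LOCAL}}\mathsf P_2$ if for computable $s,r,t,p$ such a reduction exists with $|V(G')|\le|V(G)|^{s(k)}$, all paths $\eta(e)$ of length $\le r(k)$, running time $\le t(k)$ rounds, $k'\le p(k)$, and $(G,k)\in\mathsf P_1\iff(G',k')\in\mathsf P_2$ (congestion unbounded). $[\mathcal P]^{\mathrm{LOCAL}}$ is the set of problems reducing to some member of $\mathcal P$. Circuits: a Boolean decision circuit with $n$ inputs is $C=(V,E,\beta)$, $(V,E)$ a finite DAG, $\beta:V\to\{\neg,\vee,\wedge,\bigvee,\bigwedge\}\cup\{x_1,\dots,x_n\}$,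 where in-degree-0 vertices are input gates labelled by some $x_i$, in-degree-1 vertices are $\neg$, in-degree-2 vertices are $\vee$ or $\wedge$ (small gates), in-degree $\ge3$ vertices are $\bigvee$ or $\bigwedge$ (large gates), and there is exactly one vertex of out-degree 0, the output gate. It computes $f_C:\{0,1\}^n\to\{0,1\}$ in the usual way. Depth: maximum number of gates on an input–output path; weft: maximum number of large gates on an input–output path. A circuit is viewed as a coloured connected graph (edge orientation and gate types as predicates, input indices as local labels). For a family $\mathcal F$ of circuits, $\mathsf P_{\mathcal F}=\{(C,k): C\in\mathcal F$ and $C$ accepts some input vector with exactly $k$ ones$\}$. Weft$[t]$ is the class of all $\mathsf P_{\mathcal F}$ where all circuits of $\mathcal F$ have depth bounded by a common constant and weft at most $t$. LOCAL-WEFT$[t]:=[\text{Weft}[t]]^{\mathrm{LOCAL}}$. *)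

From HB Require Import structures.
From mathcomp Require Import all_boot.
From Stdlib Require List.

Set Implicit Arguments.
Unset Strict Implicit.
Unset Printing Implicit Defensive.

Inductive prf : Type :=
| PZero
| PSucc
| PProj (i : nat)
| PComp (f : prf) (gs : list prf)
| PPrec (f g : prf)
| PMu (f : prf).

Inductive peval : prf -> seq nat -> nat -> Prop :=
| ev_zero args : peval PZero args 0
| ev_succ x args : peval PSucc (x :: args) x.+1
| ev_proj i args : peval (PProj i) args (nth 0 args i)
| ev_comp f gs args ys y :
    List.Forall2 (fun g z => peval g args z) gs ys ->
    peval f ys y -> peval (PComp f gs) args y
| ev_prec0 f g args y :
    peval f args y -> peval (PPrec f g) (0 :: args) y
| ev_precS f g n args r y :
    peval (PPrec f g) (n :: args) r ->
    peval g (n :: r :: args) y -> peval (PPrec f g) (n.+1 :: args) y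
| ev_mu f args y :
    peval f (y :: args) 0 ->
    (forall z, z < y -> exists v, peval f (z :: args) v.+1) ->
    peval (PMu f) args y.

Definition computable (f : nat -> nat) : Prop :=
  exists p : prf, forall n, peval p [:: n] (f n).

Record struct (s t : nat) := Struct {
  vert : finType;
  adj : rel vert;
  adj_sym : symmetric adj;
  adj_irr : irreflexive adj;
  adj_conn : forall x y, connect adj x y;
  vert_ne : 0 < #|vert|;
  lab1 : 'I_s -> pred vert;
  lab2 : 'I_t -> rel vert;
  lab2_adj : forall i x y, lab2 i x y -> adj x y }.

Arguments vert {s t} _.
Arguments adj {s t} _ _ _.
Arguments lab1 {s t} _ _ _.
Arguments lab2 {s t} _ _ _ _.

Definition iso (s t : nat) (G H : struct s t) : Prop :=
  exists f : vert G -> vert H,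
    bijective f /\
    (forall x y, adj H (f x) (f y) = adj G x y) /\
    (forall i x, lab1 H i (f x) = lab1 G i x) /\
    (forall i x y, lab2 H i (f x) (f y) = lab2 G i x y).

Definition problem (s t : nat) := struct s t -> nat -> Prop.

(* Identifiers: unique, O(log n) bits, i.e. < n^c for a fixed c.       *)
Definition valid_ids (c : nat) (s t : nat) (G : struct s t) (id : vert G -> nat) : Prop :=
  injective id /\ forall v, id v < #|vert G| ^ c.

(* A (full-information) synchronous LOCAL algorithm with output type O.
   linit k id labels nbrs : initial state of a node knowing k, its own
   identifier, its unary input labels, and for each identifier j either
   None (no neighbour with id j) or the binary labels (E_i(v,u), E_i(u,v))
   of the edge to the neighbour u with id j.
   lstep st msgs : new state, given the messages (= states) received
   from the neighbours, indexed by their identifiers.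
   Messages are unbounded, so sending the whole state is w.l.o.g. *)
Record local_alg (s t : nat) (O : Type) := LocalAlg {
  lstate : Type;
  linit : nat -> nat -> ('I_s -> bool) -> (nat -> option ('I_t -> bool * bool)) -> lstate;
  lstep : lstate -> (nat -> option lstate) -> lstate;
  lout : lstate -> O }.

Arguments lstate {s t O} _.
Arguments linit {s t O} _ _ _ _ _.
Arguments lstep {s t O} _ _ _.
Arguments lout {s t O} _ _.

Definition nbr_of (s t : nat) (G : struct s t) (id : vert G -> nat) (v : vert G) (j : nat)
  : option (vert G) := [pick u | adj G v u && (id u == j)].

Fixpoint run_state (s t : nat) (O : Type) (A : local_alg s t O) (G : struct s t)
  (id : vert G -> nat) (k : nat) (r : nat) : vert G -> lstate A :=
  match r with
  | 0 => fun v => linit A k (id v) (fun i => lab1 G i v)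
           (fun j => omap (fun u => fun i => (lab2 G i v u, lab2 G i u v)) (nbr_of id v j))
  | r'.+1 => fun v => lstep A (run_state A id k r' v)
                          (fun j => omap (run_state A id k r') (nbr_of id v j))
  end.

Definition output (s t : nat) (O : Type) (A : local_alg s t O) (G : struct s t)
  (id : vert G -> nat) (k r : nat) (v : vert G) : O := lout A (run_state A id k r v).

Definition decides_in (c s t : nat) (P : problem s t) (A : local_alg s t bool)
  (f : nat -> nat) : Prop :=
  forall (G : struct s t) (k : nat) (id : vert G -> nat), valid_ids c id ->
    (P G k <-> exists v, output A id k (f k) v).

Definition LOCAL_FPT (c s t : nat) (P : problem s t) : Prop :=
  exists (A : local_alg s t bool) (f : nat -> nat), computable f /\ decides_in c P A f.

(* Output of a node v of G: k', and for each local index j either None *)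
(* or the description of the node x of G' hosted at v (nu x = v) with  *)
(* name (id v, j): its unary labels and, for each name (a,b), either    *)
(* None or the labels of the G'-edge {x,y} where y has name (a,b),     *)
(* together with the path eta(x,y) (as a sequence of identifiers).    *)
Record red_out (s' t' : nat) := RedOut {
  ro_k : nat;
  ro_hosted : nat -> option (('I_s' -> bool) *
                 (nat * nat -> option (('I_t' -> bool * bool) * seq nat))) }.

Definition represents (s t s' t' : nat) (G : struct s t) (id : vert G -> nat)
  (o : vert G -> red_out s' t') (k' : nat) (G' : struct s' t')
  (nu : vert G' -> vert G) (eta : vert G' -> vert G' -> seq (vert G)) : Prop :=
  exists nm : vert G' -> nat,
    injective (fun x => (id (nu x), nm x)) /\
    (forall v, ro_k (o v) = k') /\
    (forall v j,
      match ro_hosted (o v) j with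
      | None => forall x, nu x = v -> nm x <> j
      | Some (l, nb) =>
          exists x, nu x = v /\ nm x = j /\ (forall i, l i = lab1 G' i x) /\
            forall a b,
              match nb (a, b) with
              | None => forall y, adj G' x y -> (id (nu y), nm y) <> (a, b)
              | Some (el, p) =>
                  exists y, adj G' x y /\ id (nu y) = a /\ nm y = b /\
                    (forall i, el i = (lab2 G' i x y, lab2 G' i y x)) /\
                    p = map id (eta x y)
              end
      end).

Definition short_paths (s t s' t' : nat) (G : struct s t) (G' : struct s' t')
  (nu : vert G' -> vert G) (eta : vert G' -> vert G' -> seq (vert G)) (len : nat) : Prop :=
  forall x y, adj G' x y ->
    [/\ path (adj G) (nu x) (eta x y), last (nu x) (eta x y) = nu y & size (eta x y) <= len].

Definition local_reduces (c s1 t1 s2 t2 : nat) (P1 : problem s1 t1) (P2 : problem s2 t2)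
  : Prop :=
  exists (sz rr tt pp : nat -> nat) (A : local_alg s1 t1 (red_out s2 t2)),
    [/\ computable sz, computable rr, computable tt, computable pp &
    forall (G : struct s1 t1) (k : nat) (id : vert G -> nat), valid_ids c id ->
      exists (k' : nat) (G' : struct s2 t2) (nu : vert G' -> vert G)
             (eta : vert G' -> vert G' -> seq (vert G)),
        [/\ represents id (fun v => output A id k (tt k) v) k' nu eta,
            #|vert G'| <= #|vert G| ^ sz k,
            short_paths nu eta (rr k),
            k' <= pp k &
            (P1 G k <-> P2 G' k')]].

Definition g_in   : 'I_6 := @Ordinal 6 0 isT.
Definition g_neg  : 'I_6 := @Ordinal 6 1 isT.
Definition g_or   : 'I_6 := @Ordinal 6 2 isT.
Definition g_and  : 'I_6 := @Ordinal 6 3 isT.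
Definition g_bor  : 'I_6 := @Ordinal 6 4 isT.
Definition g_band : 'I_6 := @Ordinal 6 5 isT.

Definition circ := struct 6 1.

Definition wire (C : circ) : rel (vert C) := lab2 C (@Ordinal 1 0 isT).
Definition indeg (C : circ) (x : vert C) : nat := #|[pred y | wire y x]|.
Definition outdeg (C : circ) (x : vert C) : nat := #|[pred y | wire x y]|.

Definition is_circuit (C : circ) : Prop :=
  [/\ (forall x y, adj C x y -> wire x y != wire y x),
      (forall x y, wire x y -> ~~ connect (@wire C) y x),
      (forall x, #|[pred i : 'I_6 | lab1 C i x]| = 1),
      (forall x, [/\ lab1 C g_in x = (indeg x == 0),
                     lab1 C g_neg x = (indeg x == 1),
                     (lab1 C g_or x || lab1 C g_and x) = (indeg x == 2) &
                     (lab1 C g_bor x || lab1 C g_band x) = (2 < indeg x)]) &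
      #|[pred x : vert C | outdeg x == 0]| = 1].

(* C accepts some input vector of weight exactly k; input gates are the
   variables, val is the (unique) gate valuation. *)
Definition accepts_weight (C : circ) (k : nat) : Prop :=
  exists val : vert C -> bool,
    [/\ (forall x, lab1 C g_neg x -> val x = ~~ [exists y, wire y x && val y]),
        (forall x, lab1 C g_or x || lab1 C g_bor x -> val x = [exists y, wire y x && val y]),
        (forall x, lab1 C g_and x || lab1 C g_band x -> val x = [forall y, wire y x ==> val y]),
        #|[pred x | lab1 C g_in x && val x]| = k &
        exists o, (outdeg o == 0) && val o].

Definition io_path (C : circ) (x : vert C) (p : seq (vert C)) : bool :=
  [&& lab1 C g_in x, path (@wire C) x p & outdeg (last x p) == 0].

Definition depth_le (C : circ) (d : nat) : Prop :=
  forall (x : vert C) p, io_path x p -> size (x :: p) <= d.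

Definition weft_le (C : circ) (w : nat) : Prop :=
  forall (x : vert C) p, io_path x p ->
    count (fun y => lab1 C g_bor y || lab1 C g_band y) (x :: p) <= w.

Definition P_F (F : circ -> Prop) : problem 6 1 :=
  fun C k => F C /\ accepts_weight C k.

Definition in_Weft (w : nat) (P : problem 6 1) : Prop :=
  exists F : circ -> Prop,
    [/\ (forall C C', iso C C' -> F C -> F C'),
        (exists d, forall C, F C -> [/\ is_circuit C, depth_le C d & weft_le C w]) &
        (forall C k, P C k <-> P_F F C k)].

Definition LOCAL_WEFT (c w s t : nat) (P : problem s t) : Prop :=
  exists P2 : problem 6 1, in_Weft w P2 /\ local_reduces c P P2.

(* Let P reduce, by a LOCAL reduction A running in tt k rounds with paths of
   length <= rr k, to weighted satisfiability for a family F of circuits of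
   depth <= d.  A circuit is connected, so in a circuit of depth <= d every
   gate lies within distance d of the unique output gate; in G this becomes
   distance rr k * d from the host of the output gate.  The decider is the
   full-information algorithm: every node gathers its view of radius
   tt k + rr k * d and accepts iff that view occurs at a node v0 of some
   instance whose reduced circuit is accepted and hosted within distance
   rr k * d of v0.  Completeness: take v0 the host of the output gate.
   Soundness: views agree on the ball around v0, so A produces on G the same
   descriptions for all hosted gates, and the circuit reduced from G is
   isomorphic to the certified one (connectedness forces equality). *)

From HB Require Import structures.
From mathcomp Require Import all_boot.
From Stdlib Require Import FunctionalExtensionality ClassicalDescription.

Set Implicit Arguments.
Unset Strict Implicit.
Unset Printing Implicit Defensive.

(* The truth value of a proposition, by classical choice; the decider below
   evaluates an undecidable predicate on views, which the LOCAL model allows. *)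
Definition holds (A : Prop) : bool := if excluded_middle_informative A then true else false.

Lemma holdsP (A : Prop) : reflect A (holds A).
Proof. by rewrite /holds; case: excluded_middle_informative => H; constructor. Qed.

Definition near (s t : nat) (G : struct s t) (L : nat) (a b : vert G) : Prop :=
  exists p, [/\ path (adj G) a p, last a p = b & size p <= L].
Arguments near {s t} G L a b.

Lemma near_mono (s t : nat) (G : struct s t) (L1 L2 : nat) (a b : vert G) :
  near G L1 a b -> L1 <= L2 -> near G L2 a b.
Proof. by move=> [p [pp lp sp]] le; exists p; split=> //; apply: leq_trans le. Qed.

Lemma near_sym (s t : nat) (G : struct s t) (L : nat) (a b : vert G) :
  near G L a b -> near G L b a.
Proof.
move=> [p [pp <- sp]]; exists (rev (belast a p)); split.
- by rewrite rev_path (eq_path (fun x y => @adj_sym _ _ G y x)).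
- by case: p {pp sp} => //= y p; rewrite rev_cons last_rcons.
- by rewrite size_rev size_belast.
Qed.

Lemma lift_near (s t s' t' : nat) (G : struct s t) (G' : struct s' t')
    (nu : vert G' -> vert G) (eta : vert G' -> vert G' -> seq (vert G)) (L : nat) :
  short_paths nu eta L ->
  forall p a, path (adj G') a p -> near G (size p * L) (nu a) (nu (last a p)).
Proof.
move=> sp; elim=> [|b p IH] a /=; first by exists [::].
case/andP=> ab pb; have [q [pq lq sq]] := IH b pb.
have [pe le se] := sp a b ab.
exists (eta a b ++ q); rewrite cat_path last_cat le pe pq lq size_cat mulSn.
by split=> //; apply: leq_add.
Qed.

(* A view of radius r records the initial
   knowledge of a node together with, recursively, the views of radius r-1 of
   its neighbours indexed by their identifiers.  Since messages are
   unbounded, the state of any LOCAL algorithm after r rounds is a function of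
   the view of radius r, so a single algorithm that gathers views and decides
   by an arbitrary predicate on them is as strong as any other. *)
Section Views.
Variables s t : nat.

Inductive view : Type :=
| VLeaf : nat -> nat -> ('I_s -> bool) -> (nat -> option ('I_t -> bool * bool)) -> view
| VNode : view -> (nat -> option view) -> view.

Definition full_info_alg (decide : view -> bool) : local_alg s t bool :=
  @LocalAlg s t bool view VLeaf VNode decide.

Fixpoint gather (G : struct s t) (id : vert G -> nat) (k r : nat) : vert G -> view :=
  match r with
  | 0 => fun v => VLeaf k (id v) (fun i => lab1 G i v)
           (fun j => omap (fun u => fun i => (lab2 G i v u, lab2 G i u v)) (nbr_of id v j))
  | r'.+1 => fun v => VNode (gather id k r' v) (fun j => omap (gather id k r') (nbr_of id v j))
  end.

Lemma output_full_info (decide : view -> bool) (G : struct s t) (id : vert G -> nat) (k r : nat)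
    (v : vert G) :
  output (full_info_alg decide) id k r v = decide (gather id k r v).
Proof.
rewrite /output; suff -> : run_state (full_info_alg decide) id k r = gather id k r by [].
by elim: r => [|r IH] //=; rewrite IH.
Qed.

Fixpoint replay (O : Type) (A : local_alg s t O) (x : view) : lstate A :=
  match x with
  | VLeaf k i l n => linit A k i l n
  | VNode st m => lstep A (replay A st) (fun j => omap (replay A) (m j))
  end.

Lemma run_state_replay (O : Type) (A : local_alg s t O) (G : struct s t) (id : vert G -> nat)
    (k r : nat) (v : vert G) :
  run_state A id k r v = replay A (gather id k r v).
Proof.
elim: r v => [|r IH] v //=; rewrite IH; congr (lstep A _ _).
by apply: functional_extensionality => j; case: (nbr_of id v j) => //= u; rewrite IH.
Qed.

Fixpoint view_param (x : view) : nat :=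
  match x with VLeaf k _ _ _ => k | VNode st _ => view_param st end.
Fixpoint view_id (x : view) : nat :=
  match x with VLeaf _ i _ _ => i | VNode st _ => view_id st end.

Lemma view_param_gather (G : struct s t) (id : vert G -> nat) (k r : nat) (v : vert G) :
  view_param (gather id k r v) = k.
Proof. by elim: r v => [|r IH] v //=. Qed.

Lemma view_id_gather (G : struct s t) (id : vert G -> nat) (k r : nat) (v : vert G) :
  view_id (gather id k r v) = id v.
Proof. by elim: r v => [|r IH] v //=. Qed.

Lemma same_view_same_output (O : Type) (A : local_alg s t O) (G G0 : struct s t)
    (id : vert G -> nat) (id0 : vert G0 -> nat) (k r : nat) (v : vert G) (v0 : vert G0) :
  gather id k r v = gather id0 k r v0 ->
  output A id k r v = output A id0 k r v0 /\ id v = id0 v0.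
Proof.
move=> E; rewrite /output !run_state_replay E; split=> //.
by rewrite -(view_id_gather id k r v) E view_id_gather.
Qed.

Lemma gather_trunc (G G0 : struct s t) (id : vert G -> nat) (id0 : vert G0 -> nat)
    (k a b : nat) (v : vert G) (v0 : vert G0) :
  gather id k (a + b) v = gather id0 k (a + b) v0 -> gather id k a v = gather id0 k a v0.
Proof.
elim: b => [|b IH]; first by rewrite addn0.
by rewrite addnS /= => [[/IH]].
Qed.

Lemma nbr_of_adj (G : struct s t) (id : vert G -> nat) (v w : vert G) :
  injective id -> adj G v w -> nbr_of id v (id w) = Some w.
Proof.
move=> inj vw; rewrite /nbr_of; case: pickP => [u /andP[_ /eqP /inj ->] //|].
by move/(_ w); rewrite vw eqxx.
Qed.

Lemma walk_in_view (G G0 : struct s t) (id : vert G -> nat) (id0 : vert G0 -> nat) (k : nat) :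
  injective id0 -> forall p r v v0,
  gather id k (r + size p) v = gather id0 k (r + size p) v0 -> path (adj G0) v0 p ->
  exists u, gather id k r u = gather id0 k r (last v0 p).
Proof.
move=> inj; elim=> [|w p IH] r v v0 /=; first by rewrite addn0 => E _; exists v.
rewrite addnS /= => [[_ E]] /andP[v0w pw].
have := congr1 (fun f => f (id0 w)) E; rewrite /= nbr_of_adj //.
case: (nbr_of id v (id0 w)) => [u|] //= [Eu].
exact: IH Eu pw.
Qed.

Lemma near_same_view (G G0 : struct s t) (id : vert G -> nat) (id0 : vert G0 -> nat)
    (k a L : nat) (v : vert G) (v0 x0 : vert G0) :
  injective id0 -> gather id k (a + L) v = gather id0 k (a + L) v0 -> near G0 L v0 x0 ->
  exists u, gather id k a u = gather id0 k a x0.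
Proof.
move=> inj E [p [pp <- sp]].
have E' : gather id k ((a + size p) + (L - size p)) v =
          gather id0 k ((a + size p) + (L - size p)) v0 by rewrite -addnA subnKC.
exact: walk_in_view inj _ _ _ _ (gather_trunc E') pp.
Qed.

End Views.

Definition describes (s t : nat) (H : struct s t) (N : vert H -> nat * nat) (x : vert H)
    (l : 'I_s -> bool) (nb : nat * nat -> option (('I_t -> bool * bool) * seq nat)) : Prop :=
  (forall i, l i = lab1 H i x) /\
  forall a b, match nb (a, b) with
              | None => forall y, adj H x y -> N y <> (a, b)
              | Some (el, _) => exists y, [/\ adj H x y, N y = (a, b) &
                                  forall i, el i = (lab2 H i x y, lab2 H i y x)]
              end.

Lemma describes_nbr (s t : nat) (H1 H2 : struct s t) (N1 : vert H1 -> nat * nat)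
    (N2 : vert H2 -> nat * nat) (x1 y1 : vert H1) (x2 : vert H2) l nb :
  injective N1 -> describes N1 x1 l nb -> describes N2 x2 l nb -> adj H1 x1 y1 ->
  exists y2, [/\ adj H2 x2 y2, N2 y2 = N1 y1 &
    forall i, (lab2 H2 i x2 y2, lab2 H2 i y2 x2) = (lab2 H1 i x1 y1, lab2 H1 i y1 x1)].
Proof.
move=> inj1 [_ D1] [_ D2] xy1.
move: (D1 (N1 y1).1 (N1 y1).2) (D2 (N1 y1).1 (N1 y1).2); rewrite -surjective_pairing.
case: (nb (N1 y1)) => [[el p]|]; last by move/(_ y1 xy1).
move=> [y1' [_ /inj1 -> E1]] [y2 [xy2 Ny2 E2]].
by exists y2; split=> // i; rewrite -E1 -E2.
Qed.

(* A name-preserving map between structures with injective names, under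
   which every node keeps its description, is an isomorphism: descriptions
   make it a local isomorphism, and connectedness of the target makes it
   onto. *)
Lemma describes_iso (s t : nat) (H1 H2 : struct s t) (N1 : vert H1 -> nat * nat)
    (N2 : vert H2 -> nat * nat) (psi : vert H1 -> vert H2) :
  injective N1 -> injective N2 -> (forall x, N2 (psi x) = N1 x) ->
  (forall x, exists l nb, describes N1 x l nb /\ describes N2 (psi x) l nb) -> iso H1 H2.
Proof.
move=> inj1 inj2 Npsi D.
have psi_inj : injective psi by move=> x y /(congr1 N2); rewrite !Npsi => /inj1.
have fwd x y : adj H1 x y ->
    adj H2 (psi x) (psi y) /\ forall i, lab2 H2 i (psi x) (psi y) = lab2 H1 i x y.
  move=> xy; have [l [nb [D1 D2]]] := D x.
  have [y2 [xy2 Ny2 E]] := describes_nbr inj1 D1 D2 xy.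
  rewrite -Npsi in Ny2; move/inj2: Ny2 => <-; split=> // i.
  by have [] := E i.
have bwd x z : adj H2 (psi x) z -> exists y, adj H1 x y /\ psi y = z.
  move=> xz; have [l [nb [D1 D2]]] := D x.
  have [y [xy Ny _]] := describes_nbr inj2 D2 D1 xz.
  by exists y; split=> //; apply: inj2; rewrite Npsi.
have adjE x y : adj H2 (psi x) (psi y) = adj H1 x y.
  apply/idP/idP; last by case/fwd.
  by case/bwd=> y1 [xy1 /psi_inj <-].
have psi_onto z : exists x, psi x = z.
  have [x0 _] : exists x0 : vert H1, x0 \in predT by apply/card_gt0P; exact: vert_ne.
  have /connectP [p pz ->] := adj_conn (psi x0) z.
  elim: p x0 pz => [|y p IH] x0 /=; first by exists x0.
  by case/andP=> /bwd [y1 [_ <-]]; apply: IH.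
have [g gK] := fin_all_exists psi_onto.
exists psi; split; first by exists g => // x; apply: psi_inj; rewrite gK.
split; first exact: adjE.
split; first by move=> i x; have [l [nb [[L1 _] [L2 _]]]] := D x; rewrite -L1 -L2.
move=> i x y; case xy: (adj H1 x y); first by have [_ ->] := fwd x y xy.
by apply/idP/idP=> /lab2_adj; rewrite ?adjE xy.
Qed.

Lemma represents_hosts (s t s' t' : nat) (G : struct s t) (id : vert G -> nat)
    (o : vert G -> red_out s' t') (k' : nat) (G' : struct s' t') (nu : vert G' -> vert G)
    (eta : vert G' -> vert G' -> seq (vert G)) :
  represents id o k' nu eta ->
  exists nm : vert G' -> nat,
    [/\ injective (fun x => (id (nu x), nm x)),
        forall v, ro_k (o v) = k',
        forall x, exists l nb, ro_hosted (o (nu x)) (nm x) = Some (l, nb) /\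
                               describes (fun y => (id (nu y), nm y)) x l nb &
        forall v j l nb, ro_hosted (o v) j = Some (l, nb) ->
          exists x, [/\ nu x = v, nm x = j & describes (fun y => (id (nu y), nm y)) x l nb]].
Proof.
move=> [nm [inj [ok host]]].
have some_host v j l nb : ro_hosted (o v) j = Some (l, nb) ->
    exists x, [/\ nu x = v, nm x = j & describes (fun y => (id (nu y), nm y)) x l nb].
  move=> E; have := host v j; rewrite E => -[x [xv [xj [Hl Hn]]]].
  exists x; split=> //; split=> // a b; move: (Hn a b).
  case: (nb (a, b)) => [[el p]|] // [y [xy [ya [yb [ye _]]]]].
  by exists y; split=> //; rewrite ya yb.
exists nm; split=> // x; case E: (ro_hosted (o (nu x)) (nm x)) => [[l nb]|].
  have [x1 [x1v x1j D]] := some_host _ _ _ _ E.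
  have -> : x = x1 by apply: inj => /=; rewrite x1v x1j.
  by exists l, nb.
by have := host (nu x) (nm x); rewrite E => /(_ x erefl).
Qed.

Lemma represents_iso (s t s' t' : nat) (G G0 : struct s t) (id : vert G -> nat)
    (id0 : vert G0 -> nat) (o : vert G -> red_out s' t') (o0 : vert G0 -> red_out s' t')
    (k' k0' : nat) (H : struct s' t') (H0 : struct s' t') (nu : vert H -> vert G)
    (nu0 : vert H0 -> vert G0) (eta : vert H -> vert H -> seq (vert G))
    (eta0 : vert H0 -> vert H0 -> seq (vert G0)) :
  represents id0 o0 k0' nu0 eta0 -> represents id o k' nu eta ->
  (forall x, exists u, o u = o0 (nu0 x) /\ id u = id0 (nu0 x)) -> iso H0 H /\ k0' = k'.
Proof.
move=> /represents_hosts [nm0 [inj0 k0E desc0 _]] /represents_hosts [nm [inj kE _ desc]] twin.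
have copy x0 : exists x, (id (nu x), nm x) = (id0 (nu0 x0), nm0 x0) /\
    exists l nb, describes (fun y => (id0 (nu0 y), nm0 y)) x0 l nb /\
                 describes (fun y => (id (nu y), nm y)) x l nb.
  have [u [ou idu]] := twin x0; have [l [nb [E D0]]] := desc0 x0.
  rewrite -ou in E; have [x [xu xn D]] := desc _ _ _ _ E.
  by exists x; rewrite xu xn idu; split=> //; exists l, nb.
have [psi psiE] := fin_all_exists copy; split.
  by apply: (describes_iso inj0 inj (psi := psi)) => x; case: (psiE x).
have [x0 _] : exists x0 : vert H0, x0 \in predT by apply/card_gt0P; exact: vert_ne.
have [u [ou _]] := twin x0.
by rewrite -(k0E (nu0 x0)) -(kE u) ou.
Qed.

Section Bijections.
Variables (T T' : finType) (g : T' -> T) (p : pred T).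
Hypothesis g_bij : bijective g.

Lemma card_bij : #|[pred y | p (g y)]| = #|[pred x | p x]|.
Proof.
rewrite -(on_card_preimset (onW_bij _ g_bij)); apply: eq_card => y.
by rewrite !inE.
Qed.

Lemma exists_bij : [exists y, p (g y)] = [exists x, p x].
Proof.
have [f gK fK] := g_bij; apply/existsP/existsP => [[y Py]|[x Px]]; first by exists (g y).
by exists (f x); rewrite fK.
Qed.

Lemma forall_bij : [forall y, p (g y)] = [forall x, p x].
Proof.
have [f gK fK] := g_bij; apply/forallP/forallP => [H x|H y //].
by rewrite -(fK x).
Qed.
End Bijections.

Lemma accepts_iso (C C' : circ) (k : nat) : iso C C' -> accepts_weight C k -> accepts_weight C' k.
Proof.
move=> [f [[g fK gK] [adjE [lab1E lab2E]]]] [val [Hneg Hor Hand Hcard [o /andP[Ho Vo]]]].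
have g_bij : bijective g by exists f.
have lab1g i x : lab1 C' i x = lab1 C i (g x) by rewrite -{1}(gK x) lab1E.
have wireg x y : wire x y = wire (g x) (g y) :> bool.
  by rewrite /wire -{1}(gK x) -{1}(gK y) lab2E.
have some_in x : [exists y, wire y x && val (g y)] = [exists y, wire y (g x) && val y].
  by rewrite -(exists_bij (fun y => wire y (g x) && val y) g_bij); apply: eq_existsb => y;
     rewrite wireg.
exists (fun x => val (g x)); split.
- by move=> x; rewrite lab1g => /Hneg ->; rewrite some_in.
- by move=> x; rewrite !lab1g => /Hor ->; rewrite some_in.
- move=> x; rewrite !lab1g => /Hand ->.
  rewrite -(forall_bij (fun y => wire y (g x) ==> val y) g_bij).
  by apply: eq_forallb => y; rewrite wireg.
- rewrite -Hcard -(card_bij (fun x => lab1 C g_in x && val x) g_bij).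
  by apply: eq_card => y; rewrite !inE lab1g.
- exists (f o); rewrite fK Vo andbT.
  rewrite /outdeg -(card_bij (fun y => wire o y) g_bij) in Ho.
  by rewrite /outdeg (eq_card (B := [pred y | wire o (g y)])) // => y; rewrite !inE wireg fK.
Qed.

(* In a finite acyclic relation every element starts a walk ending at a sink,
   by induction on the number of elements reachable from it. *)
Lemma sink_path (T : finType) (e : rel T) :
  (forall x y, e x y -> ~~ connect e y x) ->
  forall x, exists p, path e x p /\ forall y, ~~ e (last x p) y.
Proof.
move=> acyc.
suff walk n x : #|[pred y | connect e x y]| < n ->
    exists p, path e x p /\ forall y, ~~ e (last x p) y by move=> x; apply: (walk _ x (ltnSn _)).
elim: n x => [|n IH] x // reach.
case: (pickP (e x)) => [y xy|sink]; last by exists [::]; split=> // y; rewrite sink.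
have [|p [pp pl]] := IH y; last by exists (y :: p); rewrite /= xy pp.
rewrite ltnS in reach; apply: leq_trans reach; apply: proper_card; apply/properP; split.
  by apply/subsetP=> z; rewrite !inE => /(connect_trans (connect1 xy)).
by exists x; rewrite !inE ?connect0 // (negbTE (acyc _ _ xy)).
Qed.

(* In a circuit of depth <= d every gate reaches the output gate by a wire
   path with at most d wires: extend the gate backwards to an input gate and
   forwards to a sink, which must be the unique output gate; the resulting
   input-output path has at most d gates. *)
Lemma gate_to_output (C : circ) (d : nat) : is_circuit C -> depth_le C d ->
  exists o, forall x, exists p, [/\ path (@wire C) x p, last x p = o & size p <= d].
Proof.
case=> _ acyc _ types /eqP/card1P [o outE] depth; exists o => x.
have [pf [ppf sink]] := sink_path acyc x.
have acyc_rev a b : (fun a b => @wire C b a) a b -> ~~ connect (fun a b => wire b a) b a.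
  by move=> ba; rewrite connect_rev; apply: acyc.
have [pb [ppb source]] := sink_path acyc_rev x.
set i := last x pb in source.
have i_in : lab1 C g_in i.
  have [-> _ _ _] := types i; apply/eqP; apply: eq_card0 => y; rewrite inE.
  by apply/negbTE; apply: source.
have out_last : last x pf = o.
  suff : last x pf \in [pred x | outdeg x == 0] by rewrite outE inE => /eqP.
  by rewrite inE; apply/eqP; apply: eq_card0 => y; rewrite inE; apply/negbTE; apply: sink.
have pi : path (@wire C) i (rev (belast x pb)) by rewrite /i rev_path.
have li : last i (rev (belast x pb)) = x.
  by rewrite /i; case: (pb) => //= y p; rewrite rev_cons last_rcons.
have io : io_path i (rev (belast x pb) ++ pf).
  rewrite /io_path i_in cat_path pi li ppf last_cat li out_last.
  by rewrite (eqP (_ : o \in [pred x | outdeg x == 0])) // outE inE.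
exists pf; split=> //; have := depth _ _ io; rewrite /= size_cat.
by move=> io_size; apply: leq_trans io_size; rewrite -addSn leq_addl.
Qed.

(* Hence a connected circuit of depth <= d has radius <= d around its output
   gate: this is the only property of bounded-depth circuits we need. *)
Lemma circuit_radius (C : circ) (d : nat) : is_circuit C -> depth_le C d ->
  exists o, forall x, near C d o x.
Proof.
move=> circ depth; have [o Ho] := gate_to_output circ depth; exists o => x.
have [p [pp lp sp]] := Ho x; apply: near_sym; exists p; split=> //.
by apply: sub_path pp => a b; apply: lab2_adj.
Qed.

Definition prf_add : prf := PPrec (PProj 0) (PComp PSucc [:: PProj 1]).
Definition prf_mul : prf := PPrec PZero (PComp prf_add [:: PProj 1; PProj 2]).
Fixpoint prf_const (d : nat) : prf :=
  match d with 0 => PZero | d'.+1 => PComp PSucc [:: prf_const d'] end.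

Lemma peval_add (n m : nat) : peval prf_add [:: n; m] (n + m).
Proof.
elim: n => [|n IH]; first by apply: ev_prec0; apply: (ev_proj 0 [:: m]).
apply: ev_precS IH _; apply: (ev_comp (ys := [:: n + m])); last exact: ev_succ.
by constructor; [apply: (ev_proj 1 [:: n; n + m; m]) | constructor].
Qed.

Lemma peval_mul (n m : nat) : peval prf_mul [:: n; m] (n * m).
Proof.
elim: n => [|n IH]; first by apply: ev_prec0; apply: ev_zero.
apply: ev_precS IH _; apply: (ev_comp (ys := [:: n * m; m])).
  constructor; first by apply: (ev_proj 1 [:: n; n * m; m]).
  by constructor; [apply: (ev_proj 2 [:: n; n * m; m]) | constructor].
by rewrite mulSn addnC; apply: peval_add.
Qed.

Lemma peval_const (d : nat) (args : seq nat) : peval (prf_const d) args d.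
Proof.
elim: d => [|d IH]; first exact: ev_zero.
by apply: (ev_comp (ys := [:: d])); [constructor | exact: ev_succ].
Qed.

Lemma computable_add_mulc (f g : nat -> nat) (d : nat) :
  computable f -> computable g -> computable (fun k => f k + g k * d).
Proof.
move=> [pf Hf] [pg Hg].
exists (PComp prf_add [:: pf; PComp prf_mul [:: pg; prf_const d]]) => n.
apply: (ev_comp (ys := [:: f n; g n * d])); last exact: peval_add.
constructor; first exact: Hf.
constructor; last by constructor.
apply: (ev_comp (ys := [:: g n; d])); last exact: peval_mul.
by constructor; [exact: Hg | constructor; [exact: peval_const | constructor]].
Qed.

Section Decider.
Variables (c s t : nat) (P : problem s t) (F : circ -> Prop) (d : nat).
Hypothesis F_iso : forall C C', iso C C' -> F C -> F C'.
Hypothesis F_shallow : forall C, F C -> is_circuit C /\ depth_le C d.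
Variables (rr tt : nat -> nat) (A : local_alg s t (red_out 6 1)).
Hypothesis reduction : forall (G : struct s t) (k : nat) (id : vert G -> nat), valid_ids c id ->
  exists (k' : nat) (G' : circ) (nu : vert G' -> vert G) (eta : vert G' -> vert G' -> seq (vert G)),
    [/\ represents id (fun v => output A id k (tt k) v) k' nu eta,
        short_paths nu eta (rr k) & (P G k <-> P_F F G' k')].

Definition radius (k : nat) : nat := tt k + rr k * d.

Definition certifies (G0 : struct s t) (id0 : vert G0 -> nat) (k0 : nat) (v0 : vert G0) : Prop :=
  valid_ids c id0 /\
  exists (k' : nat) (G' : circ) (nu : vert G' -> vert G0)
         (eta : vert G' -> vert G' -> seq (vert G0)),
    [/\ represents id0 (fun v => output A id0 k0 (tt k0) v) k' nu eta,
        forall x, near G0 (rr k0 * d) v0 (nu x) & P_F F G' k'].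

Definition accepting_view (x : view s t) : Prop :=
  exists (k0 : nat) (G0 : struct s t) (id0 : vert G0 -> nat) (v0 : vert G0),
    gather id0 k0 (radius k0) v0 = x /\ certifies id0 k0 v0.

Definition decider : local_alg s t bool := full_info_alg (fun x => holds (accepting_view x)).

(* Completeness: on a yes-instance, the host of the output gate certifies
   acceptance, as the reduced circuit has radius <= d around that gate and
   each of its edges spans at most rr k edges of G. *)
Lemma decider_complete (G : struct s t) (k : nat) (id : vert G -> nat) :
  valid_ids c id -> P G k -> exists v, output decider id k (radius k) v.
Proof.
move=> vid PGk; have [k' [G' [nu [eta [rep short PE]]]]] := reduction k vid.
have yes := PE.1 PGk; have [circ depth] := F_shallow yes.1.
have [o o_center] := circuit_radius circ depth.
exists (nu o); rewrite output_full_info; apply/holdsP.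
exists k, G, id, (nu o); split=> //; split=> //; exists k', G', nu, eta; split=> // x.
have [p [pp <- sp]] := o_center x.
by apply: near_mono (lift_near short pp) _; rewrite mulnC leq_mul.
Qed.

(* Soundness: if v accepts, the certifying instance G0 agrees with G on the
   radius-tt k views of all hosts of its circuit, so A builds on G a circuit
   containing, hence isomorphic to, the accepting circuit of G0. *)
Lemma decider_sound (G : struct s t) (k : nat) (id : vert G -> nat) (v : vert G) :
  valid_ids c id -> output decider id k (radius k) v -> P G k.
Proof.
move=> vid; rewrite output_full_info => /holdsP [k0 [G0 [id0 [v0 [same_view cert]]]]].
have ek : k0 = k by rewrite -(view_param_gather id0 k0 (radius k0) v0) same_view view_param_gather.
subst k0; have [[inj0 _] [k0' [G0' [nu0 [eta0 [rep0 near0 [FG0' acc0]]]]]]] := cert.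
have [k' [G' [nu [eta [rep _ PE]]]]] := reduction k vid.
have twin x0 : exists u, output A id k (tt k) u = output A id0 k (tt k) (nu0 x0) /\
                         id u = id0 (nu0 x0).
  have [u same_u] := near_same_view inj0 (esym same_view) (near0 x0).
  by exists u; apply: same_view_same_output.
have [isoG ek'] := represents_iso rep0 rep twin; subst k0'.
by apply/PE; split; [exact: F_iso FG0' | exact: accepts_iso acc0].
Qed.

End Decider.

(* Main theorem: LOCAL-WEFT[w] is contained in LOCAL-FPT.  Only the bounded
   depth of the target circuits matters. *)
Theorem mainTheorem4 :
  forall (c : nat), 1 <= c ->
  forall (w : nat), 1 <= w ->
  forall (s t : nat) (P : problem s t),
    LOCAL_WEFT c w P -> LOCAL_FPT c P.
Proof.
move=> c _ w _ s t P [P2 [[F [F_iso [d F_bounded] P2E]] [? [rr [tt [? [A red]]]]]]].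
case: red => _ rr_comp tt_comp _ red_correct.
have F_shallow C : F C -> is_circuit C /\ depth_le C d by case/F_bounded.
have reduction (G : struct s t) k (id : vert G -> nat) : valid_ids c id ->
  exists k' (G' : circ) (nu : vert G' -> vert G) eta,
    [/\ represents id (fun v => output A id k (tt k) v) k' nu eta,
        short_paths nu eta (rr k) & (P G k <-> P_F F G' k')].
  move=> /(red_correct G k id) [k' [G' [nu [eta [rep _ short _ PE]]]]].
  by exists k', G', nu, eta; split=> //; apply: iff_trans PE (P2E _ _).
exists (decider c F d rr tt A), (radius d rr tt); split; first exact: computable_add_mulc.
move=> G k id vid; split; first exact: decider_complete.
by case=> v; apply: decider_sound.
Qed.
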